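(* Let $(A,\circ)$ be a right normal band and $F$ a proper filter of $A$. Then $\epsilon_F$ is a congruence on $(A,\circ)$, and both $F$ and its complement $A\setminus F$ are unions of $\epsilon_F$-classes.
   Context: A right normal band is a semigroup $(A,\circ)$ with $x\circ x=x$ and $(x\circ y)\circ z=(y\circ x)\circ z$. Define $f\lesssim g$ iff $g\circ f=f$. A filter is a non-empty $F\subseteq A$ with $a\circ b\in F$ for all $a,b\in F$ and such that $a\in F$, $a\lesssim b$ imply $b\in F$; it is proper if $F\ne A$. For a filter $F$, $\epsilon_F=\{(a,b)\in A\times A: e\circ a=e\circ b$ for some $e\in F\}$. *)

Definition is_right_normal_band {A : Type} (op : A -> A -> A) : Prop :=
  (forall x y z, op (op x y) z = op x (op y z)) /\
  (forall x, op x x = x) /\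
  (forall x y z, op (op x y) z = op (op y x) z).

Definition lesssim {A : Type} (op : A -> A -> A) (f g : A) : Prop := op g f = f.

Definition is_filter {A : Type} (op : A -> A -> A) (F : A -> Prop) : Prop :=
  (exists a, F a) /\
  (forall a b, F a -> F b -> F (op a b)) /\
  (forall a b, F a -> lesssim op a b -> F b).

Definition is_proper_filter {A : Type} (op : A -> A -> A) (F : A -> Prop) : Prop :=
  is_filter op F /\ exists a, ~ F a.

Definition epsilon {A : Type} (op : A -> A -> A) (F : A -> Prop) (a b : A) : Prop :=
  exists e, F e /\ op e a = op e b.

Definition is_congruence {A : Type} (op : A -> A -> A) (R : A -> A -> Prop) : Prop :=
  (forall a, R a a) /\
  (forall a b, R a b -> R b a) /\
  (forall a b c, R a b -> R b c -> R a c) /\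
  (forall a b c d, R a b -> R c d -> R (op a c) (op b d)).

Definition union_of_classes {A : Type} (R : A -> A -> Prop) (S : A -> Prop) : Prop :=
  forall a b, R a b -> S a -> S b.


(* In a right normal band [x (y z) = y (x z)], so left multiplications commute
   with each other and [e b ≲ b] for all [e], [b].  Hence if [e ∈ F] witnesses
   [a ~ b], then [e b = e a] lies in [F] and below [b], so [F] is saturated; two
   witnesses [e], [f] combine into the witness [f e] for transitivity. *)

Section RightNormalBand.

Variables (A : Type) (op : A -> A -> A).

Hypothesis mulA : forall x y z, op (op x y) z = op x (op y z).
Hypothesis mulxx : forall x, op x x = x.
Hypothesis right_normal : forall x y z, op (op x y) z = op (op y x) z.

Lemma mulCA x y z : op x (op y z) = op y (op x z).
Proof. rewrite <- !mulA. apply right_normal. Qed.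

Lemma lesssim_mull e b : lesssim op (op e b) b.
Proof. unfold lesssim. rewrite mulCA, mulxx. reflexivity. Qed.

Variable F : A -> Prop.

Hypothesis F_inhabited : exists a, F a.
Hypothesis F_mul : forall a b, F a -> F b -> F (op a b).
Hypothesis F_up : forall a b, F a -> lesssim op a b -> F b.

Lemma epsilon_refl a : epsilon op F a a.
Proof. destruct F_inhabited as [e Fe]. exists e. auto. Qed.

Lemma epsilon_sym a b : epsilon op F a b -> epsilon op F b a.
Proof. intros [e [Fe eab]]. exists e. auto. Qed.

Lemma epsilon_trans a b c :
  epsilon op F a b -> epsilon op F b c -> epsilon op F a c.
Proof.
  intros [e [Fe eab]] [f [Ff fbc]].
  exists (op f e). split; [apply F_mul; assumption|].
  rewrite !mulA, eab, mulCA, fbc, mulCA. reflexivity.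
Qed.

Lemma epsilon_mulr a b c : epsilon op F a b -> epsilon op F (op a c) (op b c).
Proof.
  intros [e [Fe eab]]. exists e. split; [assumption|].
  rewrite <- !mulA, eab. reflexivity.
Qed.

Lemma epsilon_mull a c d : epsilon op F c d -> epsilon op F (op a c) (op a d).
Proof.
  intros [e [Fe ecd]]. exists e. split; [assumption|].
  rewrite (mulCA e a c), (mulCA e a d), ecd. reflexivity.
Qed.

Lemma epsilon_congruence : is_congruence op (epsilon op F).
Proof.
  split; [exact epsilon_refl|].
  split; [exact epsilon_sym|].
  split; [exact epsilon_trans|].
  intros a b c d ab cd.
  apply epsilon_trans with (op b c).
  - apply epsilon_mulr; assumption.
  - apply epsilon_mull; assumption.
Qed.

Lemma filter_union_of_epsilon_classes : union_of_classes (epsilon op F) F.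
Proof.
  intros a b [e [Fe eab]] Fa.
  apply F_up with (op e b); [|apply lesssim_mull].
  rewrite <- eab. apply F_mul; assumption.
Qed.

End RightNormalBand.

Lemma union_of_classes_compl (A : Type) (R : A -> A -> Prop) (S : A -> Prop) :
  (forall a b, R a b -> R b a) ->
  union_of_classes R S -> union_of_classes R (fun a => ~ S a).
Proof. intros R_sym S_sat a b ab nSa Sb. apply nSa, (S_sat b a); auto. Qed.

Theorem proposition3p4 (A : Type) (op : A -> A -> A) (F : A -> Prop) :
  is_right_normal_band op ->
  is_proper_filter op F ->
  is_congruence op (epsilon op F) /\
  union_of_classes (epsilon op F) F /\
  union_of_classes (epsilon op F) (fun a => ~ F a).
Proof.
  intros [mulA [mulxx right_normal]] [[F_inhabited [F_mul F_up]] _].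
  assert (F_sat := filter_union_of_epsilon_classes _ _ mulA mulxx right_normal _ F_mul F_up).
  split; [|split].
  - exact (epsilon_congruence _ _ mulA right_normal _ F_inhabited F_mul).
  - exact F_sat.
  - apply union_of_classes_compl; [apply epsilon_sym | exact F_sat].
Qed.
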